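(* Let $n\ge 3$ and let $A=[a_{ij}]$ be a real $n\times n$ matrix with zero diagonal, and let $f:\Sigma_n\to\mathbb{R}$, $f(\sigma)=\sum_{i=1}^{n-1}\sum_{j=i+1}^n a_{\sigma(i)\sigma(j)}$, be the LOP objective function with input matrix $A$. Then $\hat f_{(n-2,1,1)}=0$ if and only if $a_{ij}-a_{ji}+a_{jk}-a_{kj}=a_{ik}-a_{ki}$ for all $i,j,k\in\{1,\dots,n\}$.
   Context: $\Sigma_n$ is the symmetric group on $\{1,\dots,n\}$; $\sigma(k)$ is the row/column index placed in position $k$. For a partition $\lambda$ of $n$, $\rho_\lambda$ denotes the irreducible (matrix) representation of $\Sigma_n$ indexed by $\lambda$, and the Fourier coefficient of $f$ at $\lambda$ is $\hat f_\lambda=\sum_{\sigma\in\Sigma_n}f(\sigma)\rho_\lambda(\sigma)$. *)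

From HB Require Import structures.
From mathcomp Require Import all_boot all_order all_algebra all_fingroup.
From mathcomp Require Import reals.
Set Implicit Arguments.
Unset Strict Implicit.
Unset Printing Implicit Defensive.
Import Order.TTheory GRing.Theory Num.Theory.
Local Open Scope ring_scope.

(* Permutations of {1,...,n} are modelled as 'S_n = {perm 'I_n}
   (indices shifted to 0,...,n-1). *)

Definition lop_obj (R : nzRingType) (n : nat) (A : 'M[R]_n) (s : 'S_n) : R :=
  \sum_(i < n) \sum_(j < n | (i < j)%N) A (s i) (s j).

Definition in_shape (sh : seq nat) (rc : nat * nat) : bool :=
  (rc.1 < size sh)%N && (rc.2 < nth 0%N sh rc.1)%N.

(* A Young tableau of shape sh (sh a partition of n) filled with 'I_n:
   an injective placement of the entries into the cells of sh
   (t i = (row, column) of entry i).  Since sh has exactly n cells this is a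
   bijection entries -> cells. *)
Definition is_tableau (n : nat) (sh : seq nat) (t : 'I_n -> nat * nat) : Prop :=
  injective t /\ forall i, in_shape sh (t i).

(* Tabloids are represented by their row functions r : 'I_n -> nat
   (entry i lies in row r i).  The permutation module M^sh is the space of
   R-valued functions on tabloids; a tabloid {r'} is the indicator of r'. *)
Definition same_rows (n : nat) (r1 r2 : 'I_n -> nat) : bool :=
  [forall i, r1 i == r2 i].

Definition colstab (n : nat) (t : 'I_n -> nat * nat) (p : 'S_n) : bool :=
  [forall i, (t (p i)).2 == (t i).2].

(* Polytabloid e_t = sum_{pi in C_t} sgn(pi) {pi t}, as a function on tabloids.
   The tabloid {pi t} has row function i |-> row_t (pi^-1 i). *)
Definition polytabloid (R : nzRingType) (n : nat) (t : 'I_n -> nat * nat)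
    (r : 'I_n -> nat) : R :=
  \sum_(p : 'S_n | colstab t p)
     (-1) ^+ odd_perm p * (same_rows r (fun i => (t ((p^-1)%g i)).1))%:R.

(* Left action of sigma on M: (sigma . v)(r) = v (r o sigma), so that
   sigma . {r'} = {r' o sigma^-1}. *)

(* The Fourier coefficient hat f_sh = sum_sigma f(sigma) rho_sh(sigma) is the
   matrix (in any basis) of the operator v |-> sum_sigma f(sigma) sigma . v on
   the Specht module S^sh = span of the polytabloids.  Hence hat f_sh = 0 iff
   this operator kills every polytabloid. *)
Definition fourier_vanishes (R : nzRingType) (n : nat) (f : 'S_n -> R)
    (sh : seq nat) : Prop :=
  forall t : 'I_n -> nat * nat, is_tableau sh t ->
  forall r : 'I_n -> nat,
    \sum_(s : 'S_n) f s * polytabloid R t (fun i => r (s i)) = 0.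

From HB Require Import structures.
From mathcomp Require Import all_boot all_order all_algebra all_fingroup.
From mathcomp Require Import reals.
From mathcomp Require Import zify ring.
Import Order.TTheory GRing.Theory Num.Theory.
Local Open Scope ring_scope.
Set Implicit Arguments.
Unset Strict Implicit.
Unset Printing Implicit Defensive.

(* Write d u v := A u v - A v u.  By Young's construction the coefficient at
   (n-2,1,1) vanishes iff, for every tableau t and tabloid, the sum over sigma
   of (tabloid indicator) * sum_{pi in C_t} sgn(pi) f(pi sigma) is zero.  The
   column of such a tableau has three entries, so for every entry k some odd
   transposition in C_t fixes k: the signed column sum kills every function of
   pi sigma that only sees where a single entry goes.
   If d is a coboundary, d u v = phi u - phi v, then 2 f(sigma) is a constant
   plus a sum of such one-entry functions, so the coefficient vanishes.
   Conversely, for the tableau with column {0,1,2} the signed column sum of f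
   is the cyclic sum d(s0,s1) + d(s1,s2) + d(s2,s0); testing against the
   tabloid that puts x and y in rows 1 and 2 and averaging over the entry in
   position 0 gives sum_w (d w x + d x y + d y w) = 0, i.e.
   n d x y = c x - c y with c u := sum_w d u w, and d is a coboundary. *)

Lemma big_ord_ltS (V : nmodType) n (F : 'I_n -> V) (j : 'I_n) :
  \sum_(i < n | (i < j.+1)%N) F i = \sum_(i < n | (i < j)%N) F i + F j.
Proof.
rewrite (bigD1 j) //= addrC; congr (_ + _); apply: eq_bigl => i.
by rewrite ltnS ltn_neqAle andbC.
Qed.

Lemma sum_ltn_pairs_offdiag (V : nmodType) n (F : 'I_n -> 'I_n -> V) :
  \sum_(i < n) \sum_(j < n | (i < j)%N) (F i j + F j i) =
  \sum_(i < n) \sum_(j < n | j != i) F i j.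
Proof.
under eq_bigr do rewrite big_split.
rewrite big_split /= [X in _ + X](exchange_big_dep xpredT) //= -big_split /=.
apply: eq_bigr => i _; rewrite [RHS](bigID (fun j : 'I_n => (j < i)%N)) addrC /=.
by congr (_ + _); apply: eq_bigl => j; rewrite -(inj_eq val_inj) /=; lia.
Qed.

Lemma sum_offdiag_perm (V : nmodType) n (F : 'I_n -> 'I_n -> V) (q : 'S_n) :
  \sum_(i < n) \sum_(j < n | j != i) F (q i) (q j) =
  \sum_(i < n) \sum_(j < n | j != i) F i j.
Proof.
rewrite [RHS](reindex_inj (@perm_inj _ q)); apply: eq_bigr => i _.
rewrite [RHS](reindex_inj (@perm_inj _ q)).
by apply: eq_bigl => j; rewrite (inj_eq perm_inj).
Qed.

Section ColumnStabilizer.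
Variables (n : nat) (t : 'I_n -> nat * nat).

Lemma colstab1 : colstab t 1.
Proof. by apply/forallP => i; rewrite perm1. Qed.

Lemma colstabV p : colstab t p^-1%g = colstab t p.
Proof.
apply/forallP/forallP => tp i.
  by have := tp (p i); rewrite permK eq_sym.
by have := tp (p^-1%g i); rewrite permKV eq_sym.
Qed.

Lemma colstabM p q : colstab t p -> colstab t q -> colstab t (p * q)%g.
Proof.
by move=> /forallP tp /forallP tq; apply/forallP => i; rewrite permM (eqP (tq _)).
Qed.

Lemma colstabMl u p : colstab t u -> colstab t (u * p)%g = colstab t p.
Proof.
move=> tu; apply/idP/idP => [tup|]; last exact: colstabM.
by rewrite -(mulKg u p); apply: colstabM; rewrite ?colstabV.
Qed.

Lemma colstab_tperm a b : (t a).2 = (t b).2 -> colstab t (tperm a b).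
Proof. by move=> tab; apply/forallP => i; case: tpermP => [->|->|] //; rewrite tab. Qed.

Lemma same_rows_mulg (p s : 'S_n) (r : 'I_n -> nat) :
  same_rows (fun i => r ((p * s)%g i)) (fun i => (t (p i)).1) =
  same_rows (fun i => r (s i)) (fun i => (t i).1).
Proof.
apply/forallP/forallP => rows i; last by rewrite permM; apply: rows.
by have := rows (p^-1%g i); rewrite permM permKV.
Qed.

End ColumnStabilizer.

Lemma signed_sum_odd_stable (R : numDomainType) n (P : pred 'S_n) (u : 'S_n)
    (h : 'S_n -> R) :
  odd_perm u -> (forall p, P (u * p)%g = P p) ->
  (forall p, P p -> h (u * p)%g = h p) ->
  \sum_(p | P p) (-1) ^+ odd_perm p * h p = 0.
Proof.
move=> odd_u Pu hu; set S := \sum_(p | P p) _.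
have S_opp : S = - S.
  rewrite {1}/S (reindex_inj (mulgI u)) /= -sumrN.
  apply: eq_big => [p | p]; first by rewrite Pu.
  rewrite Pu => Pp; rewrite hu // odd_permM odd_u signr_addb expr1.
  by rewrite mulN1r mulNr.
have : S *+ 2 == 0 by rewrite mulr2n {2}S_opp subrr.
by rewrite mulrn_eq0 => /eqP.
Qed.

Lemma sum_polytabloidE (R : comNzRingType) n (f : 'S_n -> R) t r :
  \sum_(s : 'S_n) f s * polytabloid R t (fun i => r (s i)) =
  \sum_(s : 'S_n) (same_rows (fun i => r (s i)) (fun i => (t i).1))%:R *
     \sum_(p | colstab t p) (-1) ^+ odd_perm p * f (p * s)%g.
Proof.
under eq_bigr do rewrite /polytabloid big_distrr.
under [RHS]eq_bigr do rewrite big_distrr.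
rewrite exchange_big [RHS]exchange_big /= (reindex_inj invg_inj) /=.
apply: eq_big => [p | p _]; first by rewrite colstabV.
rewrite (reindex_inj (mulgI p)) /=; apply: eq_bigr => s _.
by rewrite odd_permV invgK same_rows_mulg mulrCA mulrA mulrC.
Qed.

Section HookShape.
Variable m : nat.
Local Notation N := m.+3.

Definition hook_shape : seq nat := [:: (N - 2)%N; 1%N; 1%N].

Definition hook_cells : seq (nat * nat) :=
  [seq (0%N, c) | c <- iota 0 m.+1] ++ [:: (1, 0); (2, 0)]%N.

Lemma in_hook_cells rc : in_shape hook_shape rc -> rc \in hook_cells.
Proof.
case: rc => -[|[|[|r]]] c //; rewrite /in_shape /= ?subSS ?subn0 mem_cat.
- by move=> lt_c; rewrite (map_f (fun c => (0%N, c))) ?mem_iota.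
- by rewrite ltnS leqn0 => /eqP ->; rewrite !inE eqxx orbT.
- by rewrite ltnS leqn0 => /eqP ->; rewrite !inE eqxx !orbT.
Qed.

Lemma hook_tableau_column0 (t : 'I_N -> nat * nat) : is_tableau hook_shape t ->
  exists a b c : 'I_N, [/\ a != b, a != c, b != c &
    [/\ (t a).2 = 0%N, (t b).2 = 0%N & (t c).2 = 0%N]].
Proof.
move=> [t_inj t_shape].
have [_ cover] : ((size (codom t) = size hook_cells) * (codom t =i hook_cells))%type.
  apply: uniq_min_size => [|_ /codomP[i ->]|]; first by rewrite map_inj_uniq ?enum_uniq.
    exact: in_hook_cells.
  by rewrite size_codom card_ord size_cat size_map size_iota addn2.
have /codomP[a ta] : (0, 0)%N \in codom t.
  by rewrite cover mem_cat (map_f (fun c => (0%N, c))) ?mem_iota.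
have /codomP[b tb] : (1, 0)%N \in codom t by rewrite cover mem_cat !inE eqxx orbT.
have /codomP[c tc] : (2, 0)%N \in codom t by rewrite cover mem_cat !inE eqxx !orbT.
exists a, b, c; split; last by rewrite -ta -tb -tc.
all: by rewrite -(inj_eq t_inj) -?ta -?tb -?tc.
Qed.

Lemma odd_colstab_fixing (t : 'I_N -> nat * nat) : is_tableau hook_shape t ->
  forall k, exists2 u, odd_perm u && colstab t u & u k = k.
Proof.
move=> /hook_tableau_column0[a [b [c [ab ac bc [ta tb tc]]]]] k.
have swap (x y z : 'I_N) : x != y -> (t x).2 = (t y).2 -> x != z -> y != z ->
    exists2 u, odd_perm u && colstab t u & u z = z.
  move=> xy txy xk yk; exists (tperm x y); last exact: tpermD.
  by rewrite odd_tperm xy colstab_tperm.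
have [<- | bk] := eqVneq b k; first by apply: (swap a c); rewrite ?ta ?tc // eq_sym.
have [<- | ck] := eqVneq c k; first by apply: (swap a b); rewrite ?ta ?tb.
by apply: (swap b c); rewrite ?tb ?tc.
Qed.

Lemma signed_colstab_sum_eval (R : numDomainType) (t : 'I_N -> nat * nat) (k : 'I_N)
    (psi : 'I_N -> R) :
  is_tableau hook_shape t ->
  \sum_(p | colstab t p) (-1) ^+ odd_perm p * psi (p k) = 0.
Proof.
move=> /odd_colstab_fixing /(_ k)[u /andP[odd_u tu] uk].
apply: (signed_sum_odd_stable odd_u) => p; first exact: colstabMl.
by rewrite permM uk.
Qed.

End HookShape.

Lemma lop_obj_mul2 (R : nzRingType) n (A : 'M[R]_n) (phi : 'I_n -> R) (q : 'S_n) :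
  (forall u v, A u v - A v u = phi u - phi v) ->
  lop_obj A q *+ 2 = \sum_(i < n) \sum_(j < n | j != i) A i j +
    \sum_(i < n) \sum_(j < n | (i < j)%N) (phi (q i) - phi (q j)).
Proof.
move=> skewA; rewrite -(sum_offdiag_perm (fun i j => A i j) q) -sum_ltn_pairs_offdiag.
rewrite -big_split /lop_obj -sumrMnl; apply: eq_bigr => i _.
rewrite -big_split -sumrMnl; apply: eq_bigr => j _.
by rewrite /= -skewA addrACA subrr addr0 mulr2n.
Qed.

Lemma fourier_vanishes_of_skew_cocycle (R : numDomainType) m (A : 'M[R]_m.+3) :
  (forall i j k, A i j - A j i + A j k - A k j = A i k - A k i) ->
  fourier_vanishes (lop_obj A) (hook_shape m).
Proof.
move=> cocycle t tab r; rewrite sum_polytabloidE; apply: big1 => s _.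
pose phi u := A u ord0 - A ord0 u.
have skewA u v : A u v - A v u = phi u - phi v.
  by rewrite -(cocycle u ord0 v) /phi; ring.
have eval0 k : \sum_(p | colstab t p) (-1) ^+ odd_perm p * phi ((p * s)%g k) = 0.
  under eq_bigr do rewrite permM.
  exact: signed_colstab_sum_eval (fun u => phi (s u)) tab.
suff /eqP : (\sum_(p | colstab t p) (-1) ^+ odd_perm p * lop_obj A (p * s)%g) *+ 2 = 0.
  by rewrite mulrn_eq0 => /eqP->; rewrite mulr0.
rewrite -sumrMnl; under eq_bigr do rewrite -mulrnAr (lop_obj_mul2 _ skewA) mulrDr.
rewrite big_split /= (signed_colstab_sum_eval ord0 (fun=> _) tab) add0r.
rewrite (eq_bigr (fun p => \sum_(i < m.+3) \sum_(j < m.+3 | (i < j)%N)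
    (-1) ^+ odd_perm p * (phi ((p * s)%g i) - phi ((p * s)%g j)))); last first.
  by move=> p _; rewrite big_distrr; apply: eq_bigr => i _; rewrite big_distrr.
rewrite exchange_big big1 // => i _; rewrite exchange_big big1 // => j _.
by under eq_bigr do rewrite mulrBr; rewrite sumrB !eval0 subrr.
Qed.

Section CanonicalHookTableau.
Variable m : nat.
Local Notation N := m.+3.

Definition i0 : 'I_N := Ordinal (isT : 0 < N)%N.
Definition i1 : 'I_N := Ordinal (isT : 1 < N)%N.
Definition i2 : 'I_N := Ordinal (isT : 2 < N)%N.

Definition tab0 (i : 'I_N) : nat * nat :=
  if (i < 3)%N then (val i, 0%N) else (0%N, (i - 2)%N).

Definition col0 : {set 'I_N} := [set i0; i1; i2].

Lemma mem_col0 k : (k \in col0) = (k < 3)%N.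
Proof. by rewrite !inE -!val_eqE /=; case: k => -[|[|[|k]]]. Qed.

Lemma card_col0 : #|col0| = 3%N.
Proof. by rewrite /col0 setUC !cardsU1 cards1 !inE. Qed.

Lemma tab0_tableau : is_tableau (hook_shape m) tab0.
Proof.
split=> [i j | i]; rewrite /tab0 /in_shape /=.
  by case: ifP => ?; case: ifP => ? [] *; apply: val_inj => //=; lia.
by rewrite /hook_shape; case: ifP; case: i => -[|[|[|i]]] //= *; lia.
Qed.

Lemma colstab_tab0E p : colstab tab0 p = perm_on col0 p.
Proof.
apply/forallP/idP => [tab0p | p_on k].
  apply/subsetP => k; rewrite mem_col0; apply: contraR => k3.
  have := tab0p k; rewrite /tab0 (negbTE k3).
  by case: ifP => pk3 /eqP /= e; apply/eqP/ord_inj; lia.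
have [kS | kS] := boolP (k \in col0); last by rewrite (out_perm p_on kS).
by rewrite /tab0 -!mem_col0 (perm_closed _ p_on) kS.
Qed.

Lemma colstab_tab0_fix p (j : 'I_N) : colstab tab0 p -> (3 <= j)%N -> p j = j.
Proof.
by rewrite colstab_tab0E => p_on j3; apply: out_perm p_on _; rewrite mem_col0 -leqNgt.
Qed.

Definition col0_perms : seq 'S_N := [:: 1; tperm i0 i1; tperm i0 i2; tperm i1 i2;
  tperm i0 i1 * tperm i1 i2; tperm i1 i2 * tperm i0 i1]%g.

Lemma col0_perms_uniq : uniq col0_perms.
Proof.
apply: (map_uniq (f := fun q : 'S_N => (val (q i0), val (q i1)))).
by rewrite /= !permM !perm1 !permE.
Qed.

Lemma colstab_tab0_enum p : colstab tab0 p = (p \in col0_perms).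
Proof.
have mem_enum_on q : (q \in enum (perm_on col0)) = colstab tab0 q.
  by rewrite mem_enum colstab_tab0E.
have tab0_tperm (a b : 'I_N) : (a < 3)%N -> (b < 3)%N -> colstab tab0 (tperm a b).
  by move=> a3 b3; apply: colstab_tperm; rewrite /tab0 a3 b3.
have sub_enum : {subset col0_perms <= enum (perm_on col0)}.
  move=> q; rewrite mem_enum_on !inE.
  by do ![case/orP=> [/eqP-> |]]; try move/eqP->; rewrite ?colstab1 ?colstabM ?tab0_tperm.
have size_enum : (size (enum (perm_on col0)) <= size col0_perms)%N.
  by rewrite -cardE card_perm card_col0.
by have [_ ->] := uniq_min_size col0_perms_uniq sub_enum size_enum; rewrite mem_enum_on.
Qed.

Lemma lop_obj_tab0_split (R : nzRingType) (A : 'M[R]_N) q :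
  lop_obj A q = A (q i0) (q i1) + A (q i0) (q i2) + A (q i1) (q i2) +
    \sum_(j < N | (3 <= j)%N) \sum_(i < N | (i < j)%N) A (q i) (q j).
Proof.
have sum_lt0 (F : 'I_N -> R) : \sum_(i < N | (i < i0)%N) F i = 0.
  by rewrite big_pred0 // => i; rewrite ltn0.
rewrite /lop_obj (exchange_big_dep xpredT) //= (bigID (fun j : 'I_N => (j < i2.+1)%N)) /=.
congr (_ + _); last by apply: eq_bigl => j; rewrite -leqNgt.
rewrite (big_ord_ltS _ i2) (big_ord_ltS _ i1) (big_ord_ltS _ i0) sum_lt0 add0r.
by rewrite (big_ord_ltS _ i1) !(big_ord_ltS _ i0) !sum_lt0 !add0r addrA.
Qed.

Lemma signed_colstab_tab0_lop (R : numDomainType) (A : 'M[R]_N) (s : 'S_N) :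
  \sum_(p | colstab tab0 p) (-1) ^+ odd_perm p * lop_obj A (p * s)%g =
  (A (s i0) (s i1) - A (s i1) (s i0)) + (A (s i1) (s i2) - A (s i2) (s i1)) +
  (A (s i2) (s i0) - A (s i0) (s i2)).
Proof.
under eq_bigr do rewrite lop_obj_tab0_split mulrDr.
rewrite big_split /= [X in _ + X](_ : _ = 0) ?addr0; last first.
  rewrite (eq_bigr (fun p => \sum_(j < N | (3 <= j)%N) \sum_(i < N | (i < j)%N)
      (-1) ^+ odd_perm p * A (s (p i)) (s j))); last first.
    move=> p tab0p; rewrite big_distrr; apply: eq_bigr => j j3; rewrite big_distrr.
    by apply: eq_bigr => i _; rewrite !permM (colstab_tab0_fix tab0p j3).
  rewrite exchange_big big1 // => j _; rewrite exchange_big big1 // => i _.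
  exact: signed_colstab_sum_eval (fun u => A (s u) (s j)) tab0_tableau.
rewrite (eq_bigl (fun p => p \in col0_perms) _ colstab_tab0_enum).
rewrite -big_uniq ?col0_perms_uniq //= !big_cons big_nil.
rewrite !permM !perm1 !odd_permM !odd_tperm odd_perm1 !permE /=.
ring.
Qed.

Definition rows_xy (x y k : 'I_N) : nat :=
  if k == x then 1%N else if k == y then 2%N else 0%N.

Lemma same_rows_tab0 (x y : 'I_N) (s : 'S_N) : x != y ->
  same_rows (fun i => rows_xy x y (s i)) (fun i => (tab0 i).1) =
  (s i1 == x) && (s i2 == y).
Proof.
move=> xy; apply/forallP/andP => [rows | [/eqP s1 /eqP s2] i].
  move: (rows i1) (rows i2); rewrite /rows_xy /=.
  by case: (s i1 == x); case: (s i1 == y); case: (s i2 == x); case: (s i2 == y).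
rewrite /rows_xy /tab0; have [-> | ni1] := eqVneq i i1; first by rewrite s1 eqxx.
have [-> | ni2] := eqVneq i i2; first by rewrite s2 (eq_sym y) (negbTE xy) eqxx.
rewrite -s1 -s2 !(inj_eq perm_inj) (negbTE ni1) (negbTE ni2).
by case: ifP => //= i3; move: ni1 ni2; rewrite -!val_eqE /=; lia.
Qed.

Lemma sum_pinned_perms (R : numDomainType) (x y : 'I_N) (h : 'I_N -> R) : x != y ->
  \sum_(s : 'S_N | (s i1 == x) && (s i2 == y)) h (s i0) = 0 ->
  \sum_(w | (w != x) && (w != y)) h w = 0.
Proof.
move=> xy; set P := fun s : 'S_N => (s i1 == x) && (s i2 == y) => sum_i0.
have sum_k k : k != i1 -> k != i2 -> \sum_(s | P s) h (s k) = 0.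
  move=> k1 k2; apply: etrans sum_i0; rewrite (reindex_inj (mulgI (tperm i0 k))) /=.
  apply: eq_big => [s | s _]; last by rewrite permM tpermR.
  by rewrite /P !permM !tpermD.
have : \sum_(k | (k != i1) && (k != i2)) \sum_(s | P s) h (s k) = 0.
  by apply: big1 => k /andP[]; exact: sum_k.
rewrite exchange_big (eq_bigr (fun=> \sum_(w | (w != x) && (w != y)) h w)) /=.
  rewrite sumr_const => /eqP; rewrite mulrn_eq0 => /orP[/eqP/card0_eq no_P | /eqP //].
  pose z := tperm i1 x y; pose s0 := (tperm i2 z * tperm i1 x)%g.
  have zi1 : z != i1.
    by rewrite -(inj_eq (@perm_inj _ (tperm i1 x))) tpermL /z tpermK eq_sym.
  have := no_P s0; rewrite unfold_in /= !permM tpermL (tpermD _ zi1) // tpermL tpermK.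
  by rewrite !eqxx.
move=> s /andP[/eqP <- /eqP <-]; rewrite [RHS](reindex_inj (@perm_inj _ s)) /=.
by apply: eq_bigl => k; rewrite !(inj_eq perm_inj).
Qed.

Lemma cycle_sum_of_fourier_vanishes (R : numDomainType) (A : 'M[R]_N) :
  fourier_vanishes (lop_obj A) (hook_shape m) -> forall x y : 'I_N,
  \sum_(w < N) ((A w x - A x w) + (A x y - A y x) + (A y w - A w y)) = 0.
Proof.
move=> vanish x y; have [<- | xy] := eqVneq x y; first by apply: big1 => w _; ring.
have := vanish tab0 tab0_tableau (rows_xy x y); rewrite sum_polytabloidE.
under eq_bigr do rewrite same_rows_tab0 // signed_colstab_tab0_lop mulr_natl mulrb.
pose h w := (A w x - A x w) + (A x y - A y x) + (A y w - A w y).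
rewrite -big_mkcond (eq_bigr (fun s : 'S_N => h (s i0))); last first.
  by move=> s /andP[/eqP-> /eqP->].
move=> /(sum_pinned_perms xy) sum_h.
rewrite (bigD1 x) // (bigD1 y) /=; last by rewrite eq_sym.
by rewrite sum_h addr0 /h; ring.
Qed.

Lemma skew_cocycle_of_fourier_vanishes (R : numDomainType) (A : 'M[R]_N) :
  fourier_vanishes (lop_obj A) (hook_shape m) ->
  forall i j k, A i j - A j i + A j k - A k j = A i k - A k i.
Proof.
move=> /cycle_sum_of_fourier_vanishes cycle_sum.
pose c u := \sum_(w < N) (A u w - A w u).
have skewN u v : (A u v - A v u) *+ N = c u - c v.
  have cN : \sum_(w < N) (A w u - A u w) = - c u.
    by rewrite -sumrN; apply: eq_bigr => w _; rewrite opprB.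
  have := cycle_sum u v; rewrite big_split /= big_split /= sumr_const card_ord.
  rewrite cN -/(c v) => sum0.
  by rewrite -[LHS]subr0 -sum0; ring.
move=> i j k; suff /eqP : (A i j - A j i + A j k - A k j - (A i k - A k i)) *+ N = 0.
  by rewrite mulrn_eq0 /= subr_eq0 => /eqP.
have -> : (A i j - A j i + A j k - A k j - (A i k - A k i)) *+ N =
    (A i j - A j i) *+ N + (A j k - A k j) *+ N - (A i k - A k i) *+ N by ring.
by rewrite !skewN; ring.
Qed.

End CanonicalHookTableau.

Theorem proposition1 (R : realType) (n : nat) (A : 'M[R]_n) :
  (3 <= n)%N ->
  (forall i, A i i = 0) ->
  (fourier_vanishes (lop_obj A) [:: (n - 2)%N; 1%N; 1%N] <->
   (forall i j k : 'I_n, A i j - A j i + A j k - A k j = A i k - A k i)).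
Proof.
case: n A => [|[|[|m]]] A // _ _; split.
  exact: skew_cocycle_of_fourier_vanishes.
exact: fourier_vanishes_of_skew_cocycle.
Qed.
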